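(* Let $f:\mathcal X\times\mathcal Y\to\{0,1\}$, let $\mu:\mathcal X\times\mathcal Y\to[0,1]$ be a (not necessarily normalized) product function $\mu(x,y)=\mu_X(x)\mu_Y(y)$, let $\epsilon,\delta\in(0,1)$, let $\langle w_R\rangle$ be an optimal solution of the LP defining $\mathrm{srec}^{1,\mu}_{\epsilon,\delta}(f)$ and $D=\sum_R w_R>0$ its value. Let $X_0\subseteq\mathcal X$, $Y_0\subseteq\mathcal Y$, $X_1=\mathcal X\setminus X_0$, $Y_1=\mathcal Y\setminus Y_0$, $R^{(ij)}=X_i\times Y_j$, and assume $\mu(R^{(ij)})>0$ for all $i,j\in\{0,1\}$ and $\mu_1(R^{(00)})\le\sqrt\delta\,\mu_0(R^{(00)})$. Let $\mu^{(ij)}$ be $\mu$ restricted to $R^{(ij)}$ (zero outside). For $i,j$ with $\mu_1(R^{(ij)})>0$ let $$\epsilon^{(ij)}=1-\frac{\sum_{(x,y)\in f^{-1}(1)\cap R^{(ij)}}\mu(x,y)\sum_{R\ni(x,y)}w_R}{\mu_1(R^{(ij)})}.$$ Then there exists $(ij)\in\{(01),(10)\}$ such that either (a) $2\mu^{(ij)}(f^{-1}(1))\le\mu^{(ij)}(f^{-1}(0))$, or (b) $\mathrm{srec}^{1,\mu^{(ij)}}_{\epsilon^{(ij)}+30\delta^{1/4},\,\delta}(f)\le0.9D$.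
   Context: A rectangle is $A\times B$ with $A\subseteq\mathcal X,B\subseteq\mathcal Y$. For nonnegative $\mu$: $\mu_z(R)=\mu(R\cap f^{-1}(z))$, $\mu_z=\mu_z(\mathcal X\times\mathcal Y)$. $\mathrm{srec}^{z,\mu}_{\epsilon,\delta}(f)$ is the optimal value of: minimize $\sum_R w_R$ over $w_R\ge0$ (one per rectangle) subject to $\sum_{(x,y)\in f^{-1}(z)}\mu(x,y)\sum_{R\ni(x,y)}w_R\ge(1-\epsilon)\mu_z$; $\sum_{R\ni(x,y)}w_R\le\delta$ for all $(x,y)\notin f^{-1}(z)$; $\sum_{R\ni(x,y)}w_R\le1$ for all $(x,y)$. (For $\epsilon\ge1$ the covering constraint is vacuous.) *)

From HB Require Import structures.
From mathcomp Require Import all_boot all_order all_algebra.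
Set Implicit Arguments. Unset Strict Implicit. Unset Printing Implicit Defensive.
Import Order.TTheory GRing.Theory Num.Theory.
Local Open Scope ring_scope.

Section SRec.
Variables (R : rcfType) (X Y : finType).

Definition rect := ({set X} * {set Y})%type.

Definition cov (w : rect -> R) (x : X) (y : Y) : R :=
  \sum_(r : rect | (x \in r.1) && (y \in r.2)) w r.

Definition massz (f : X -> Y -> bool) (mu : X -> Y -> R) (z : bool) : R :=
  \sum_(x : X) \sum_(y : Y | f x y == z) mu x y.

Definition restr (A : {set X}) (B : {set Y}) (mu : X -> Y -> R) : X -> Y -> R :=
  fun x y => if (x \in A) && (y \in B) then mu x y else 0.

Definition massR (mu : X -> Y -> R) (A : {set X}) (B : {set Y}) : R :=
  \sum_(x in A) \sum_(y in B) mu x y.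

Definition srec_feasible (f : X -> Y -> bool) (mu : X -> Y -> R) (z : bool)
    (eps delta : R) (w : rect -> R) : Prop :=
  [/\ forall r, 0 <= w r,
      (1 - eps) * massz f mu z <=
        \sum_(x : X) \sum_(y : Y | f x y == z) mu x y * cov w x y,
      forall x y, f x y != z -> cov w x y <= delta
    & forall x y, cov w x y <= 1].

Definition lp_value (w : rect -> R) : R := \sum_(r : rect) w r.

Definition srec_optimal f mu z eps delta (w : rect -> R) : Prop :=
  srec_feasible f mu z eps delta w /\
  forall w', srec_feasible f mu z eps delta w' -> lp_value w <= lp_value w'.

(* srec^{z,mu}_{eps,delta}(f) <= c : since the LP optimum is attained when the
   LP is feasible (and is +infinity otherwise), this says some feasible
   solution has value <= c. *)
Definition srec_le f mu z eps delta (c : R) : Prop :=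
  exists w, srec_feasible f mu z eps delta w /\ lp_value w <= c.

Definition eps_blk f mu (w : rect -> R) (A : {set X}) (B : {set Y}) : R :=
  1 - (\sum_(x : X) \sum_(y : Y | f x y) restr A B mu x y * cov w x y)
      / massz f (restr A B mu) true.

Definition blk_concl f mu (w : rect -> R) (delta D : R) A B : Prop :=
  let m := restr A B mu in
  2 * massz f m true <= massz f m false \/
  srec_le f m true (eps_blk f mu w A B + 30 * Num.sqrt (Num.sqrt delta)) delta
          (9 / 10 * D).

End SRec.

From HB Require Import structures.
From mathcomp Require Import all_boot all_order all_algebra.
From mathcomp Require Import ring lra.
Import Order.TTheory GRing.Theory Num.Theory.
Local Open Scope ring_scope.
Set Implicit Arguments. Unset Strict Implicit. Unset Printing Implicit Defensive.

(* Let [s = delta^(1/4)] and, for a rectangle [r], let [q_ij r] be the share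
   of [mu(R^(ij))] that [r] covers.  Since [mu] is a product,
   [q_00 r * q_11 r = q_01 r * q_10 r]; hence on the rectangles [T] where
   [q_01 <= q_10] we get [q_01 <= sqrt (q_00 q_11)], and by AM-GM
   [2 s q_01 <= q_00 + s^2 q_11].  The cover [w] puts weight at most
   [mu_1(R^(00)) + delta mu_0(R^(00)) <= 2 s^2 mu(R^(00))] on [R^(00)] and at
   most [mu(R^(11))] on [R^(11)], so dropping [T] from [w] loses at most
   [2 s mu(R^(01))] of the coverage of [R^(01)]; symmetrically, dropping the
   complement of [T] loses at most [2 s mu(R^(10))] on [R^(10)].  One of the
   two reduced covers has value at most [0.9 D]; it is feasible for its block
   with error [eps^(ij) + 30 s] unless [f = 0] dominates there. *)

Lemma ler_id_sqrtr (R : rcfType) (x : R) : 0 <= x <= 1 -> x <= Num.sqrt x.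
Proof.
case/andP=> x_ge0 x_le1.
have : Num.sqrt x <= 1 by rewrite -sqrtr1 ler_sqrt.
have : Num.sqrt x ^+ 2 = x by rewrite sqr_sqrtr.
have : 0 <= Num.sqrt x := sqrtr_ge0 _.
nra.
Qed.

Section Inequalities.
Variable R : realFieldType.

Lemma ler_amgm_scaled (x u v s : R) :
  0 <= u -> 0 <= v -> 0 <= s -> x * x <= u * v -> 2 * s * x <= u + s ^+ 2 * v.
Proof.
move=> u_ge0 v_ge0 s_ge0 xx_le.
have s2v_ge0 : 0 <= s ^+ 2 * v by rewrite mulr_ge0 ?exprn_ge0.
have [x_le0|x_gt0] := lerP x 0.
  have : 2 * s * x <= 0 by rewrite mulr_ge0_le0 ?mulr_ge0.
  lra.
have sq_ge0 : 0 <= (u - s ^+ 2 * v) ^+ 2 by rewrite sqr_ge0.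
have ssxx_le : (s * s) * (x * x) <= (s * s) * (u * v) by rewrite ler_wpM2l ?mulr_ge0.
rewrite leNgt; apply/negP => lt_sx.
have : (u + s ^+ 2 * v) * (u + s ^+ 2 * v) < (2 * s * x) * (2 * s * x).
  by rewrite ltr_pM // addr_ge0.
nra.
Qed.

Lemma ler_amgm_ratio (a b c d Ma Mb Mc Md s : R) :
  0 <= a -> 0 <= b -> 0 <= d -> 0 < Ma -> 0 < Mb -> 0 < Mc -> 0 < Md -> 0 <= s ->
  a * d = b * c -> Ma * Md = Mb * Mc -> b * Mc <= c * Mb ->
  2 * s * (b / Mb) <= a / Ma + s ^+ 2 * (d / Md).
Proof.
move=> a_ge0 b_ge0 d_ge0 Ma_gt0 Mb_gt0 Mc_gt0 Md_gt0 s_ge0 ad_bc M_ad_bc le_bc.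
apply: ler_amgm_scaled => //; try by rewrite divr_ge0 // ltW.
have le_ratio : b / Mb <= c / Mc by rewrite ler_pdivrMr // mulrAC ler_pdivlMr.
have -> : a / Ma * (d / Md) = b / Mb * (c / Mc) by rewrite !mulf_div ad_bc M_ad_bc.
by rewrite ler_wpM2l // divr_ge0 // ltW.
Qed.

Lemma sum_le_offdiag (I : finType) (P : pred I) (wt p00 p11 pa pb : I -> R)
    (M00 M11 Ma Mb s : R) :
  (forall i, 0 <= wt i) ->
  (forall i, 0 <= p00 i) -> (forall i, 0 <= p11 i) -> (forall i, 0 <= pa i) ->
  0 < M00 -> 0 < M11 -> 0 < Ma -> 0 < Mb -> 0 < s ->
  (forall i, p00 i * p11 i = pa i * pb i) -> M00 * M11 = Ma * Mb ->
  (forall i, P i -> pa i * Mb <= pb i * Ma) ->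
  \sum_i wt i * p00 i <= 2 * s ^+ 2 * M00 -> \sum_i wt i * p11 i <= M11 ->
  \sum_(i | P i) wt i * pa i <= 2 * s * Ma.
Proof.
move=> wt_ge0 p00_ge0 p11_ge0 pa_ge0 M00_gt0 M11_gt0 Ma_gt0 Mb_gt0 s_gt0
  p_cross M_cross le_P sum00 sum11.
pose g i := wt i * p00 i / M00 + s ^+ 2 * (wt i * p11 i / M11).
have g_ge0 i : 0 <= g i.
  by rewrite addr_ge0 ?mulr_ge0 ?invr_ge0 ?exprn_ge0 ?(ltW M00_gt0, ltW M11_gt0, ltW s_gt0).
have le_g i : P i -> 2 * s * (wt i * pa i / Ma) <= g i.
  move=> Pi.
  have -> : 2 * s * (wt i * pa i / Ma) = wt i * (2 * s * (pa i / Ma)) by ring.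
  have -> : g i = wt i * (p00 i / M00 + s ^+ 2 * (p11 i / M11)) by rewrite /g; ring.
  rewrite ler_wpM2l //.
  exact: ler_amgm_ratio (ltW s_gt0) (p_cross i) M_cross (le_P i Pi).
have sum_g : \sum_i g i <= 3 * s ^+ 2.
  have : (\sum_i wt i * p00 i) / M00 <= 2 * s ^+ 2 by rewrite ler_pdivrMr.
  have : (\sum_i wt i * p11 i) / M11 <= 1 by rewrite ler_pdivrMr ?mul1r.
  rewrite big_split /= -mulr_sumr -!mulr_suml.
  have : 0 <= s ^+ 2 by rewrite exprn_ge0 ?ltW.
  nra.
have sum_P : \sum_(i | P i) 2 * s * (wt i * pa i / Ma) <= \sum_i g i.
  rewrite [X in _ <= X](bigID P) /= -[X in X <= _]addr0 lerD ?sumr_ge0 //.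
  exact: ler_sum.
have : 2 * s * ((\sum_(i | P i) wt i * pa i) / Ma) <= 3 * s ^+ 2.
  by rewrite mulr_suml mulr_sumr; apply: le_trans sum_P sum_g.
move=> le_S; have : (\sum_(i | P i) wt i * pa i) / Ma <= 2 * s by nra.
by rewrite ler_pdivrMr.
Qed.

End Inequalities.

Section Rectangles.
Variables (R : rcfType) (X Y : finType).
Implicit Types (f : X -> Y -> bool) (m mu : X -> Y -> R) (w : rect X Y -> R)
  (A : {set X}) (B : {set Y}).

Definition mass m : R := \sum_x \sum_y m x y.

Definition covered m w : R := \sum_x \sum_y m x y * cov w x y.

Definition covz f m (z : bool) w : R :=
  \sum_x \sum_(y | f x y == z) m x y * cov w x y.

Definition drop_rects (P : pred (rect X Y)) w (r : rect X Y) : R :=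
  if P r then 0 else w r.

Lemma sum_preim_split f (g : X -> Y -> R) :
  \sum_x \sum_y g x y =
  \sum_x \sum_(y | f x y == true) g x y + \sum_x \sum_(y | f x y == false) g x y.
Proof.
rewrite -big_split /=; apply: eq_bigr => x _.
rewrite (bigID (fun y => f x y == true)) /=; congr (_ + _).
by apply: eq_bigl => y; case: (f x y).
Qed.

Lemma mass_split f m : mass m = massz f m true + massz f m false.
Proof. exact: sum_preim_split. Qed.

Lemma covered_split f m w : covered m w = covz f m true w + covz f m false w.
Proof. exact: sum_preim_split. Qed.

Lemma restr_ge0 A B mu :
  (forall x y, 0 <= mu x y) -> forall x y, 0 <= restr A B mu x y.
Proof. by move=> mu_ge0 x y; rewrite /restr; case: ifP. Qed.

Lemma massR_restr A B (A' : {set X}) (B' : {set Y}) mu :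
  massR (restr A B mu) A' B' = massR mu (A :&: A') (B :&: B').
Proof.
rewrite /massR [LHS]big_mkcond [RHS]big_mkcond; apply: eq_bigr => x _.
rewrite inE; case: (x \in A'); rewrite ?andbF //= andbT.
case xA: (x \in A); last by rewrite big1 // => y _; rewrite /restr xA.
rewrite [LHS]big_mkcond [RHS]big_mkcond; apply: eq_bigr => y _.
by rewrite /restr xA inE; case: (y \in B'); case: (y \in B).
Qed.

Lemma mass_restr A B mu : mass (restr A B mu) = massR mu A B.
Proof.
have := massR_restr A B [set: X] [set: Y] mu; rewrite !setIT => <-.
apply: eq_big => [x | x _]; rewrite ?inE //.
by apply: eq_bigl => y; rewrite inE.
Qed.

Lemma massR_prod (muX : X -> R) (muY : Y -> R) mu A B :
  (forall x y, mu x y = muX x * muY y) ->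
  massR mu A B = (\sum_(x in A) muX x) * (\sum_(y in B) muY y).
Proof.
move=> mu_prod; rewrite /massR big_distrl; apply: eq_bigr => x _.
by rewrite big_distrr; apply: eq_bigr => y _; rewrite mu_prod.
Qed.

Lemma massR_cross mu A0 A1 B0 B1 :
  (exists (muX : X -> R) (muY : Y -> R), forall x y, mu x y = muX x * muY y) ->
  massR mu A0 B0 * massR mu A1 B1 = massR mu A0 B1 * massR mu A1 B0.
Proof. by case=> muX [muY mu_prod]; rewrite !(massR_prod _ _ mu_prod); ring. Qed.

Lemma covered_rect m w : covered m w = \sum_r w r * massR m r.1 r.2.
Proof.
have rect_term r : w r * massR m r.1 r.2 =
    \sum_x \sum_y m x y * (if (x \in r.1) && (y \in r.2) then w r else 0).
  rewrite /massR big_distrr big_mkcond /=; apply: eq_bigr => x _.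
  case: (x \in r.1); last by rewrite big1 // => y _; rewrite mulr0.
  rewrite big_distrr big_mkcond; apply: eq_bigr => y _.
  by case: (y \in r.2); rewrite ?mulr0 // mulrC.
under [RHS]eq_bigr do rewrite rect_term.
rewrite exchange_big; apply: eq_bigr => x _; rewrite exchange_big; apply: eq_bigr => y _.
rewrite /cov mulr_sumr big_mkcond; apply: eq_bigr => r _.
by case: ifP; rewrite ?mulr0.
Qed.

Lemma ler_cov w w' x y : (forall r, w r <= w' r) -> cov w x y <= cov w' x y.
Proof. by move=> le_ww'; apply: ler_sum => r _. Qed.

Lemma covered_le_massz f m w delta :
  (forall x y, 0 <= m x y) ->
  (forall x y, f x y != true -> cov w x y <= delta) -> (forall x y, cov w x y <= 1) ->
  covered m w <= massz f m true + delta * massz f m false.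
Proof.
move=> m_ge0 w_off w_le1; rewrite (covered_split f) lerD //.
  by apply: ler_sum => x _; apply: ler_sum => y _; rewrite ler_piMr.
rewrite mulr_sumr; apply: ler_sum => x _; rewrite mulr_sumr.
apply: ler_sum => y /eqP fxy; rewrite mulrC ler_wpM2r //.
by apply: w_off; rewrite fxy.
Qed.

Lemma covered_le_mass m w :
  (forall x y, 0 <= m x y) -> (forall x y, cov w x y <= 1) -> covered m w <= mass m.
Proof.
by move=> m_ge0 w_le1; apply: ler_sum => x _; apply: ler_sum => y _; rewrite ler_piMr.
Qed.

Lemma covered_le_unbalanced f m w delta t :
  (forall x y, 0 <= m x y) ->
  (forall x y, f x y != true -> cov w x y <= delta) -> (forall x y, cov w x y <= 1) ->
  0 <= t -> delta <= t -> massz f m true <= t * massz f m false ->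
  covered m w <= 2 * t * mass m.
Proof.
move=> m_ge0 w_off w_le1 t_ge0 le_delta unbalanced.
have mass_ge0 z : 0 <= massz f m z by do 2!apply: sumr_ge0 => ? _.
have := covered_le_massz m_ge0 w_off w_le1.
have : delta * massz f m false <= t * massz f m false by rewrite ler_wpM2r.
have : 0 <= t * massz f m true by rewrite mulr_ge0.
rewrite (mass_split f); lra.
Qed.

Lemma covB w w' x y : cov (w \- w') x y = cov w x y - cov w' x y.
Proof. by rewrite /cov -sumrB. Qed.

Lemma covzB f m z w w' : covz f m z (w \- w') = covz f m z w - covz f m z w'.
Proof.
rewrite /covz -sumrB; apply: eq_bigr => x _; rewrite -sumrB.
by apply: eq_bigr => y _; rewrite covB mulrBr.
Qed.

Lemma covz_ge0 f m z w :
  (forall x y, 0 <= m x y) -> (forall r, 0 <= w r) -> 0 <= covz f m z w.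
Proof.
move=> m_ge0 w_ge0; do 2!apply: sumr_ge0 => ? _.
by rewrite mulr_ge0 // sumr_ge0.
Qed.

Lemma eps_blkE f mu w A B :
  eps_blk f mu w A B =
  1 - covz f (restr A B mu) true w / massz f (restr A B mu) true.
Proof.
rewrite /eps_blk /covz; congr (1 - _ / _); apply: eq_bigr => x _.
by apply: eq_bigl => y; case: (f x y).
Qed.

(* When (a) fails, the block mass is below three times its [f = 1] mass, so
   the loss is at most [6 s] times the latter; the constant 30 is slack. *)
Lemma blk_concl_of_sub f mu w w' delta D A B :
  (forall x y, 0 <= mu x y) ->
  (forall x y, f x y != true -> cov w x y <= delta) -> (forall x y, cov w x y <= 1) ->
  (forall r, 0 <= w' r <= w r) -> lp_value w' <= 9 / 10 * D ->
  covered (restr A B mu) (w \- w') <=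
    2 * Num.sqrt (Num.sqrt delta) * massR mu A B ->
  blk_concl f mu w delta D A B.
Proof.
move=> mu_ge0 w_off w_le1 w'_bounds w'_value loss.
rewrite /blk_concl; set m := restr A B mu; set s := Num.sqrt (Num.sqrt delta).
have m_ge0 : forall x y, 0 <= m x y := restr_ge0 A B mu_ge0.
rewrite -mass_restr -/m (mass_split f) -/s in loss.
set P := massz f m true in loss *; set Z := massz f m false in loss *.
have [balanced | unbalanced] := leP (2 * P) Z; [by left | right].
have le_w'w r : w' r <= w r by case/andP: (w'_bounds r).
have le_cov x y : cov w' x y <= cov w x y by apply: ler_cov.
exists w'; split => //; split.
- by move=> r; case/andP: (w'_bounds r).
- have Z_ge0 : 0 <= Z by do 2!apply: sumr_ge0 => ? _.
  have s_ge0 : 0 <= s := sqrtr_ge0 _.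
  have P_gt0 : 0 < P by lra.
  have lost_false : 0 <= covz f m false (w \- w').
    by apply: covz_ge0 => // r; rewrite subr_ge0.
  have : s * Z <= s * (2 * P) by rewrite ler_wpM2l // ltW.
  move: loss; rewrite (covered_split f) !covzB eps_blkE -/m -/P -/(covz f m true w').
  set C := covz f m true w; set C' := covz f m true w'.
  have -> : (1 - (1 - C / P + 30 * s)) * P = C - 30 * s * P.
    by field; rewrite gt_eqF.
  rewrite covzB in lost_false; nra.
- by move=> x y /w_off; apply: le_trans.
- by move=> x y; apply: le_trans (w_le1 x y).
Qed.

Lemma covered_drop m w P :
  covered m (w \- drop_rects P w) = \sum_(r | P r) w r * massR m r.1 r.2.
Proof.
rewrite covered_rect [RHS]big_mkcond; apply: eq_bigr => r _ /=.
by rewrite /drop_rects; case: (P r); rewrite ?subr0 // subrr mul0r.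
Qed.

Lemma lp_value_drop_split w P :
  lp_value (drop_rects P w) + lp_value (drop_rects (predC P) w) = lp_value w.
Proof.
rewrite /lp_value -big_split; apply: eq_bigr => r _.
by rewrite /drop_rects /=; case: (P r); rewrite ?add0r ?addr0.
Qed.

Lemma blk_concl_of_drop f mu w delta D A B P :
  (forall x y, 0 <= mu x y) -> (forall r, 0 <= w r) ->
  (forall x y, f x y != true -> cov w x y <= delta) -> (forall x y, cov w x y <= 1) ->
  lp_value (drop_rects P w) <= 9 / 10 * D ->
  \sum_(r | P r) w r * massR (restr A B mu) r.1 r.2 <=
    2 * Num.sqrt (Num.sqrt delta) * massR mu A B ->
  blk_concl f mu w delta D A B.
Proof.
move=> mu_ge0 w_ge0 w_off w_le1 drop_value loss.
apply: blk_concl_of_sub mu_ge0 w_off w_le1 _ drop_value _; last by rewrite covered_drop.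
by move=> r; rewrite /drop_rects; case: (P r); rewrite ?lexx ?w_ge0.
Qed.

Lemma blk_concl_offdiag f mu w delta (X0 : {set X}) (Y0 : {set Y}) :
  (exists (muX : X -> R) (muY : Y -> R), forall x y, mu x y = muX x * muY y) ->
  (forall x y, 0 <= mu x y) -> (forall r, 0 <= w r) -> 0 < delta ->
  (forall x y, f x y != true -> cov w x y <= delta) -> (forall x y, cov w x y <= 1) ->
  0 <= lp_value w ->
  (forall A B, A \in [:: X0; ~: X0] -> B \in [:: Y0; ~: Y0] -> 0 < massR mu A B) ->
  covered (restr X0 Y0 mu) w <= 2 * Num.sqrt delta * massR mu X0 Y0 ->
  blk_concl f mu w delta (lp_value w) X0 (~: Y0) \/
  blk_concl f mu w delta (lp_value w) (~: X0) Y0.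
Proof.
move=> mu_prod mu_ge0 w_ge0 delta_gt0 w_off w_le1 D_ge0 M_gt0 covered00.
set s := Num.sqrt (Num.sqrt delta); set X1 := ~: X0; set Y1 := ~: Y0.
have s_gt0 : 0 < s by rewrite !sqrtr_gt0.
pose M A B := massR mu A B.
pose p A B (r : rect X Y) := massR (restr A B mu) r.1 r.2.
have [M00 M01 M10 M11] :
    [/\ 0 < M X0 Y0, 0 < M X0 Y1, 0 < M X1 Y0 & 0 < M X1 Y1].
  by split; apply: M_gt0; rewrite !inE eqxx ?orbT.
have p_ge0 A B r : 0 <= p A B r by do 2!apply: sumr_ge0 => ? _; apply: restr_ge0.
have p_cross r : p X0 Y0 r * p X1 Y1 r = p X0 Y1 r * p X1 Y0 r.
  by rewrite /p !massR_restr; apply: massR_cross.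
have M_cross : M X0 Y0 * M X1 Y1 = M X0 Y1 * M X1 Y0 by apply: massR_cross.
have sum00 : \sum_r w r * p X0 Y0 r <= 2 * s ^+ 2 * M X0 Y0.
  by rewrite -covered_rect sqr_sqrtr ?sqrtr_ge0.
have sum11 : \sum_r w r * p X1 Y1 r <= M X1 Y1.
  by rewrite -covered_rect /M -mass_restr covered_le_mass //; apply: restr_ge0.
pose T r := p X0 Y1 r * M X1 Y0 <= p X1 Y0 r * M X0 Y1.
have [drop_T | drop_nT] : lp_value (drop_rects T w) <= 9 / 10 * lp_value w \/
    lp_value (drop_rects (predC T) w) <= 9 / 10 * lp_value w.
  by have := lp_value_drop_split w T; lra.
- left; apply: (blk_concl_of_drop mu_ge0 w_ge0 w_off w_le1 drop_T).
  exact: sum_le_offdiag w_ge0 (p_ge0 X0 Y0) (p_ge0 X1 Y1) (p_ge0 X0 Y1)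
    M00 M11 M01 M10 s_gt0 p_cross M_cross (fun _ => id) sum00 sum11.
- right; apply: (blk_concl_of_drop mu_ge0 w_ge0 w_off w_le1 drop_nT).
  have p_cross' r : p X0 Y0 r * p X1 Y1 r = p X1 Y0 r * p X0 Y1 r.
    by rewrite p_cross mulrC.
  have M_cross' : M X0 Y0 * M X1 Y1 = M X1 Y0 * M X0 Y1 by rewrite M_cross mulrC.
  have le_nT r : ~~ T r -> p X1 Y0 r * M X0 Y1 <= p X0 Y1 r * M X1 Y0.
    by rewrite -ltNge => /ltW.
  exact: sum_le_offdiag w_ge0 (p_ge0 X0 Y0) (p_ge0 X1 Y1) (p_ge0 X1 Y0)
    M00 M11 M10 M01 s_gt0 p_cross' M_cross' le_nT sum00 sum11.
Qed.

End Rectangles.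

Theorem mainTheorem6 (R : rcfType) (X Y : finType) (f : X -> Y -> bool)
  (mu : X -> Y -> R)
  (hprod : exists (muX : X -> R) (muY : Y -> R), forall x y, mu x y = muX x * muY y)
  (hmu : forall x y, 0 <= mu x y <= 1)
  (eps delta : R) (heps : 0 < eps < 1) (hdelta : 0 < delta < 1)
  (w : rect X Y -> R) (hopt : srec_optimal f mu true eps delta w)
  (hD : 0 < lp_value w)
  (X0 : {set X}) (Y0 : {set Y})
  (hpos : forall (A : {set X}) (B : {set Y}),
      A \in [:: X0; ~: X0] -> B \in [:: Y0; ~: Y0] -> 0 < massR mu A B)
  (h00 : massz f (restr X0 Y0 mu) true
         <= Num.sqrt delta * massz f (restr X0 Y0 mu) false) :
  blk_concl f mu w delta (lp_value w) X0 (~: Y0) \/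
  blk_concl f mu w delta (lp_value w) (~: X0) Y0.
Proof.
case: hopt => [[w_ge0 _ w_off w_le1] _].
have mu_ge0 x y : 0 <= mu x y by case/andP: (hmu x y).
case/andP: hdelta => delta_gt0 delta_lt1.
apply: (blk_concl_offdiag hprod mu_ge0 w_ge0 delta_gt0 w_off w_le1 (ltW hD) hpos).
rewrite -mass_restr.
apply: covered_le_unbalanced (restr_ge0 X0 Y0 mu_ge0) w_off w_le1 _ _ h00.
- exact: sqrtr_ge0.
- by rewrite ler_id_sqrtr // (ltW delta_gt0) (ltW delta_lt1).
Qed.
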